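(* Let $G^1$ be a 1-wconnected 1-graph with infinitely many boundary 1-nodes (not necessarily locally 1-finite). Suppose ${}^{*}G^1$ has a hypernode (of rank 0 or 1) that is not in its principal 1-galaxy $\Gamma_0^1$. Then there exist 1-galaxies $\Gamma_i^1$, $i\in\mathbb Z$, all different from $\Gamma_0^1$, such that for all integers $i<j$ the 1-galaxy $\Gamma_i^1$ is closer to $\Gamma_0^1$ than is $\Gamma_j^1$.
   Context: 1-graphs. A 1-graph $G^1=\{X^0,B,X^1\}$ consists of a graph $G^0=\{X^0,B\}$ (0-nodes, with branches as two-element sets) and 1-nodes. The 1-nodes are obtained by partitioning the 0-tips of $G^0$ (classes of eventually identical one-ended paths) into subsets, some augmented by a single 0-node (each 0-node used at most once). Wdistance. The wdistance $d(x,y)$ is the minimum ordinal length of a two-ended 0-walk or 1-walk terminating at $x$ and $y$. A finite 0-walk has length equal to its number of branch traversals; each 0-tip traversal contributes $\omega$; 1-walk lengths are natural sums. Thus $d<\omega^2$. $\oplus$ denotes the natural sum of ordinals. 1-wconnected: any two nodes are joined by such a walk. A 0-section is the subgraph of $G^0$ induced by a maximal set of pairwise path-connected branches. A boundary 1-node is a 1-node incident to at least two 0-sections. Enlargement. Fix a free ultrafilter $\mathcal F$ on $\mathbb N$. Hypernodes are classes $[x_n]$ of sequences of 0-nodes or of 1-nodes, modulo agreement on a set in $\mathcal F$. A standard hypernode is the class of a constant sequence. 1-galaxies. Hypernodes $[x_n],[y_n]$ are 1-limitedly distant if $\{n:d(x_n,y_n)\le\omega\cdot k\}\in\mathcal F$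 for some $k\in\mathbb N$. 1-galaxies are the equivalence classes of this relation together with the hyperbranches between their 0-hypernodes. The principal 1-galaxy $\Gamma_0^1$ contains the standard hypernodes. Closeness. For 1-galaxies $\Gamma_a^1,\Gamma_b^1\ne\Gamma_0^1$, $\Gamma^1_a$ is closer to $\Gamma_0^1$ than is $\Gamma_b^1$ if there exist $[y_n]\in\Gamma_a^1$, $[z_n]\in\Gamma_b^1$ and $[x_n]\in\Gamma_0^1$ with $\{n: d(z_n,x_n)\ge d(y_n,x_n)\oplus\omega\cdot m\}\in\mathcal F$ for every $m\in\mathbb N$. *)

From Stdlib Require Import ZArith List Classical ClassicalEpsilon Relations.

(* ---------- Ordinals below omega^2 :  (a,b) stands for omega*a + b ---------- *)
Definition ord2 : Type := (nat * nat)%type.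
Definition ole (o1 o2 : ord2) : Prop :=
  (fst o1 < fst o2)%nat \/ (fst o1 = fst o2 /\ (snd o1 <= snd o2)%nat).
(* natural (Hessenberg) sum *)
Definition osum (o1 o2 : ord2) : ord2 := (fst o1 + fst o2, snd o1 + snd o2)%nat.
Definition omega_mul (k : nat) : ord2 := (k, 0%nat).

Section ZeroGraph.
Variable V : Type.
Variable adj : V -> V -> Prop.

(* a one-ended path, listed by its 0-nodes *)
Definition is_path (p : nat -> V) : Prop :=
  (forall m n, p m = p n -> m = n) /\ (forall n, adj (p n) (p (S n))).

(* eventually identical one-ended paths (same 0-tip) *)
Definition tip_eq (p q : nat -> V) : Prop :=
  exists k l, forall n, p (k + n)%nat = q (l + n)%nat.

Definition conn0 : V -> V -> Prop := clos_refl_trans V adj.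
End ZeroGraph.

Record OneGraph := {
  V0 : Type;
  N1 : Type;
  adj : V0 -> V0 -> Prop;                      (* branches as two-element sets *)
  adj_sym : forall u v, adj u v -> adj v u;
  adj_irrefl : forall u, ~ adj u u;
  (* the 1-node to which (the 0-tip of) a one-ended path belongs *)
  tipnode : (nat -> V0) -> N1;
  tipnode_tip : forall p q, is_path V0 adj p -> is_path V0 adj q ->
                  tip_eq V0 p q -> tipnode p = tipnode q;
  (* each block of the partition of the 0-tips is nonempty *)
  node_nonempty : forall X : N1, exists p, is_path V0 adj p /\ tipnode p = X;
  (* the (optional) 0-node augmenting a 1-node; each 0-node used at most once *)
  embed : N1 -> option V0;
  embed_inj : forall X Y v, embed X = Some v -> embed Y = Some v -> X = Y
}.

Section OneGraphDefs.
Variable G : OneGraph.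

Definition node : Type := (V0 G + N1 G)%type.

(* end points of 0-walks: a 0-node or a 0-tip (given by a representative path) *)
Inductive point : Type :=
| PNode : V0 G -> point
| PTip : (nat -> V0 G) -> point.

(* node x "terminates" a 0-walk ending at point a *)
Definition holds (x : node) (a : point) : Prop :=
  match x, a with
  | inl v, PNode u => u = v
  | inl _, PTip _ => False
  | inr X, PNode u => embed G X = Some u
  | inr X, PTip p => is_path (V0 G) (adj G) p /\ tipnode G p = X
  end.

Inductive fwalk : V0 G -> V0 G -> nat -> Prop :=
| fw_nil : forall u, fwalk u u 0
| fw_cons : forall u w v k, adj G u w -> fwalk w v k -> fwalk u v (S k).

(* one-ended 0-walk starting at u and traversing the 0-tip of path p:
   a finite 0-walk followed by a one-ended path of that 0-tip *)
Definition owalk (u : V0 G) (p : nat -> V0 G) : Prop :=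
  is_path (V0 G) (adj G) p /\
  exists q, is_path (V0 G) (adj G) q /\ tip_eq (V0 G) q p /\ conn0 (V0 G) (adj G) u (q 0%nat).

(* a maximal 0-walk between two points, with its ordinal length *)
Definition seg (a b : point) (L : ord2) : Prop :=
  match a, b with
  | PNode u, PNode v => exists k, fwalk u v k /\ L = (0%nat, k)
  | PNode u, PTip p => owalk u p /\ L = omega_mul 1
  | PTip p, PNode u => owalk u p /\ L = omega_mul 1
  | PTip p, PTip q => (exists u, owalk u p /\ owalk u q) /\ L = omega_mul 2
  end.

(* a 1-walk starting at node x, currently ending at point b, of length L;
   consecutive 0-walks are joined at 1-nodes *)
Inductive wchain (x : node) : point -> ord2 -> Prop :=
| wc_start : forall a b L, holds x a -> seg a b L -> wchain x b L
| wc_step : forall b L1 X a b' L2, wchain x b L1 ->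
    holds (inr X) b -> holds (inr X) a -> seg a b' L2 ->
    wchain x b' (osum L1 L2).

Definition walk (x y : node) (L : ord2) : Prop :=
  (x = y /\ L = (0%nat, 0%nat)) \/ (exists b, wchain x b L /\ holds y b).

Definition is_wdist (x y : node) (o : ord2) : Prop :=
  walk x y o /\ forall o', walk x y o' -> ole o o'.

(* wdistance: the minimum length (well defined when x,y are 1-wconnected) *)
Definition wdist (x y : node) : ord2 :=
  epsilon (inhabits (0%nat, 0%nat)) (is_wdist x y).

Definition wconnected : Prop := forall x y : node, exists L, walk x y L.

Definition meets_section (X : N1 G) (v : V0 G) : Prop :=
  (embed G X = Some v /\ exists w, adj G v w) \/
  (exists p, is_path (V0 G) (adj G) p /\ tipnode G p = X /\ p 0%nat = v).

Definition boundary (X : N1 G) : Prop :=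
  exists u v, meets_section X u /\ meets_section X v /\ ~ conn0 (V0 G) (adj G) u v.

Definition infinitely_many_boundary : Prop :=
  ~ exists l : list (N1 G), forall X, boundary X -> In X l.

Definition free_ultrafilter (F : (nat -> Prop) -> Prop) : Prop :=
  F (fun _ => True) /\ ~ F (fun _ => False) /\
  (forall A B : nat -> Prop, (forall n, A n -> B n) -> F A -> F B) /\
  (forall A B, F A -> F B -> F (fun n => A n /\ B n)) /\
  (forall A, F A \/ F (fun n => ~ A n)) /\
  (forall k, ~ F (fun n => n = k)).

(* hypernodes are represented by sequences of nodes (classes modulo F) *)
Definition hyper : Type := nat -> node.

Definition lim_distant (F : (nat -> Prop) -> Prop) (u w : hyper) : Prop :=
  exists k, F (fun n => ole (wdist (u n) (w n)) (omega_mul k)).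

(* membership in the principal 1-galaxy: 1-limitedly distant from a standard hypernode *)
Definition in_principal (F : (nat -> Prop) -> Prop) (u : hyper) : Prop :=
  exists c : node, lim_distant F u (fun _ => c).

Definition closer (F : (nat -> Prop) -> Prop) (a b : hyper) : Prop :=
  exists y z x : hyper,
    lim_distant F y a /\ lim_distant F z b /\ in_principal F x /\
    forall m : nat,
      F (fun n => ole (osum (wdist (y n) (x n)) (omega_mul m)) (wdist (z n) (x n))).

End OneGraphDefs.

(* Fix a standard node c and a hypernode [u_n] outside the principal 1-galaxy. The
   omega-coefficients a_n of d(u_n, c) are then unbounded along the ultrafilter.
   Cutting a shortest walk from u_n to c at its 1-nodes produces nodes whose distance
   to c has any prescribed omega-coefficient s <= a_n, up to an error of 1. With
   h_n = sqrt(a_n / 2), the levels s_i = h_n (h_n + i), i in Z, fit below a_n, tend to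
   infinity and are pairwise separated by at least h_n. The corresponding hypernodes
   are therefore unboundedly far from c, hence outside the principal 1-galaxy, and their
   distances to c differ by more than every omega * m, which is closeness with the
   standard hypernode c as witness. *)

From Stdlib Require Import ZArith.
From Stdlib Require Import Lia Wf_nat Classical ClassicalEpsilon Relations.

Lemma ole_refl o : ole o o.
Proof. unfold ole; lia. Qed.

Lemma ole_trans a b c : ole a b -> ole b c -> ole a c.
Proof. unfold ole; lia. Qed.

Lemma ole_fst a b : ole a b -> fst a <= fst b.
Proof. unfold ole; lia. Qed.

Lemma osumA a b c : osum (osum a b) c = osum a (osum b c).
Proof. destruct a, b, c; unfold osum; simpl; f_equal; lia. Qed.

Lemma osum0o a : osum (0, 0) a = a.
Proof. now destruct a. Qed.

Lemma osumo0 a : osum a (0, 0) = a.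
Proof. destruct a; unfold osum; simpl; f_equal; lia. Qed.

Lemma ole_osum2l a b c : ole a b -> ole (osum a c) (osum b c).
Proof. unfold ole, osum; simpl; lia. Qed.

Lemma ole_osum2r a b c : ole b c -> ole (osum a b) (osum a c).
Proof. unfold ole, osum; simpl; lia. Qed.

Lemma ord2_has_min (P : ord2 -> Prop) : (exists o, P o) ->
  exists o, P o /\ forall o', P o' -> ole o o'.
Proof.
  intros [[n m] Pnm].
  destruct (dec_inh_nat_subset_has_unique_least_element (fun n => exists m, P (n, m)))
    as [n0 [[[m1 P1] Hn0] _]]; [intro; apply classic | eauto |].
  destruct (dec_inh_nat_subset_has_unique_least_element (fun m => P (n0, m)))
    as [m0 [[P0 Hm0] _]]; [intro; apply classic | eauto |].
  exists (n0, m0); split; [exact P0|].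
  intros [n' m'] P'; unfold ole; simpl.
  specialize (Hn0 n' (ex_intro _ m' P')).
  destruct (Nat.eq_dec n0 n') as [<-|]; [right; auto | left; lia].
Qed.

Section Walks.
Variable G : OneGraph.

Lemma fwalk_trans u v w k1 k2 : fwalk G u v k1 -> fwalk G v w k2 -> fwalk G u w (k1 + k2).
Proof.
  induction 1; intros; simpl; [assumption|].
  econstructor; [eassumption | auto].
Qed.

Lemma fwalk_conn0 u v k : fwalk G u v k -> conn0 (V0 G) (adj G) u v.
Proof.
  induction 1; [apply rt_refl|].
  eapply rt_trans; [apply rt_step|]; eassumption.
Qed.

Lemma conn0_sym u v : conn0 (V0 G) (adj G) u v -> conn0 (V0 G) (adj G) v u.
Proof.
  induction 1; [apply rt_step, adj_sym | apply rt_refl | eapply rt_trans]; eauto.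
Qed.

Lemma owalk_conn0 u v p : conn0 (V0 G) (adj G) u v -> owalk G v p -> owalk G u p.
Proof.
  intros Huv [Hp [q [Hq [Hqp Hvq]]]].
  split; [exact Hp|]. exists q; split; [exact Hq|]; split; [exact Hqp|].
  eapply rt_trans; eassumption.
Qed.

Lemma seg_trans a v b L1 L2 : seg G a (PNode G v) L1 -> seg G (PNode G v) b L2 ->
  exists L, seg G a b L /\ ole L (osum L1 L2).
Proof.
  destruct a as [u|p], b as [w|q]; simpl.
  - intros [k1 [W1 ->]] [k2 [W2 ->]].
    exists (0, k1 + k2); split; [exists (k1 + k2); split; [eapply fwalk_trans|]; eauto|].
    apply ole_refl.
  - intros [k1 [W1 ->]] [O2 ->].
    exists (omega_mul 1); split.
    + split; [|reflexivity]. eapply owalk_conn0, O2; eapply fwalk_conn0; eauto.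
    + unfold ole, osum, omega_mul; simpl; lia.
  - intros [O1 ->] [k2 [W2 ->]].
    exists (omega_mul 1); split.
    + split; [|reflexivity]. eapply owalk_conn0, O1; apply conn0_sym; eapply fwalk_conn0; eauto.
    + unfold ole, osum, omega_mul; simpl; lia.
  - intros [O1 ->] [O2 ->].
    exists (omega_mul 2); split; [split; [exists v|]; auto | apply ole_refl].
Qed.

Lemma seg_omega_le2 a b L : seg G a b L -> fst L <= 2.
Proof.
  destruct a, b; simpl; [intros [k [_ ->]] | intros [_ ->] ..]; simpl; lia.
Qed.

Lemma wchain_seg_trans x v b L1 L2 : wchain G x (PNode G v) L1 ->
  seg G (PNode G v) b L2 -> exists L, wchain G x b L /\ ole L (osum L1 L2).
Proof.
  intros C S2; inversion C as [a b0 L Ha S1 | b0 L0 X a b0' L3 C0 HX Ha S1]; subst.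
  - destruct (seg_trans _ _ _ _ _ S1 S2) as [L [S HL]].
    exists L; split; [eapply wc_start|]; eauto.
  - destruct (seg_trans _ _ _ _ _ S1 S2) as [L [S HL]].
    exists (osum L0 L); split; [eapply wc_step; eauto|].
    rewrite osumA; apply ole_osum2r, HL.
Qed.

Lemma wchain_trans_node0 y b2 L2 : wchain G y b2 L2 -> forall v, y = inl v ->
  forall x b L1, wchain G x b L1 -> holds G (inl v) b ->
  exists L, wchain G x b2 L /\ ole L (osum L1 L2).
Proof.
  induction 1 as [a b L Ha S | b L0 X a b' L3 C IH HX Ha S];
    intros v -> x b0 L1 C1 Hb0.
  - destruct a; simpl in Ha; [subst | contradiction].
    destruct b0; simpl in Hb0; [subst | contradiction].
    eapply wchain_seg_trans; eauto.
  - destruct (IH v eq_refl x b0 L1 C1 Hb0) as [L [C' HL]].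
    exists (osum L L3); split; [eapply wc_step; eauto|].
    rewrite <- osumA; apply ole_osum2l, HL.
Qed.

Lemma wchain_trans_node1 y b2 L2 : wchain G y b2 L2 -> forall X, y = inr X ->
  forall x b L1, wchain G x b L1 -> holds G (inr X) b -> wchain G x b2 (osum L1 L2).
Proof.
  induction 1 as [a b L Ha S | b L0 X a b' L3 C IH HX Ha S];
    intros X0 -> x b0 L1 C1 Hb0.
  - exact (wc_step G x b0 L1 X0 a b L C1 Hb0 Ha S).
  - rewrite <- osumA; exact (wc_step G x b _ X a b' L3 (IH X0 eq_refl x b0 L1 C1 Hb0) HX Ha S).
Qed.

Lemma walk_trans_node1 x X z L1 L2 : walk G x (inr X) L1 -> walk G (inr X) z L2 ->
  walk G x z (osum L1 L2).
Proof.
  intros [[-> ->]|[b [C1 H1]]] [[<- ->]|[b2 [C2 H2]]].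
  - left; split; reflexivity.
  - rewrite osum0o; right; eauto.
  - rewrite osumo0; right; eauto.
  - right; exists b2; split; [eapply wchain_trans_node1|]; eauto.
Qed.

Lemma walk_trans x y z L1 L2 : walk G x y L1 -> walk G y z L2 ->
  exists L, walk G x z L /\ ole L (osum L1 L2).
Proof.
  intros W1 W2; destruct y as [v|X].
  2: exists (osum L1 L2); split; [eapply walk_trans_node1; eauto | apply ole_refl].
  destruct W1 as [[-> ->]|[b [C1 H1]]].
  - exists L2; rewrite osum0o; split; [auto | apply ole_refl].
  - destruct W2 as [[<- ->]|[b2 [C2 H2]]].
    + exists L1; rewrite osumo0; split; [right; eauto | apply ole_refl].
    + destruct (wchain_trans_node0 _ _ _ C2 v eq_refl _ _ _ C1 H1) as [L [C HL]].
      exists L; split; [right|]; eauto.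
Qed.

(* Walks are cut at 1-nodes only; since each 0-walk has length below omega * 3, the
   omega-coefficient of the first piece can be brought within 1 of any target t. *)
Lemma wchain_split x b L : wchain G x b L -> forall y t, holds G y b ->
  exists w P S, walk G x w P /\ walk G w y S /\ L = osum P S /\
    fst P <= t /\ Nat.min t (fst L) <= fst P + 1.
Proof.
  induction 1 as [a b L Ha S | b L1 X a b' L2 C IH HX Ha S]; intros y t Hy;
    pose proof (seg_omega_le2 _ _ _ S).
  - assert (W : walk G x y L) by (right; exists b; split; [eapply wc_start|]; eauto).
    destruct (le_lt_dec (fst L) t).
    + exists y, L, (0, 0); repeat split; [exact W | left; auto | now rewrite osumo0 | lia | lia].
    + exists x, (0, 0), L; repeat split; [left; auto | exact W | now rewrite osum0o |..];
        simpl; lia.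
  - assert (W : walk G x y (osum L1 L2)) by (right; exists b'; split; [eapply wc_step|]; eauto).
    assert (W2 : walk G (inr X) y L2) by (right; exists b'; split; [eapply wc_start|]; eauto).
    change (fst (osum L1 L2)) with (fst L1 + fst L2).
    destruct (le_lt_dec (fst L1 + fst L2) t); [|destruct (le_lt_dec (fst L1) t)].
    + exists y, (osum L1 L2), (0, 0);
        repeat split; [exact W | left; auto | now rewrite osumo0 |..]; simpl; lia.
    + exists (inr X), L1, L2; repeat split; [right; eauto | exact W2 | lia | lia].
    + destruct (IH (inr X) t HX) as [w [P [S' [W1 [WS' [-> [HP1 HP2]]]]]]].
      exists w, P, (osum S' L2);
        repeat split; [exact W1 | eapply walk_trans_node1; eauto | now rewrite osumA |..];
        simpl in *; lia.
Qed.

Lemma walk_split x y L t : walk G x y L ->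
  exists w P S, walk G x w P /\ walk G w y S /\ L = osum P S /\
    fst P <= t /\ Nat.min t (fst L) <= fst P + 1.
Proof.
  intros [[-> ->]|[b [C Hb]]]; [|eapply wchain_split; eauto].
  exists y, (0, 0), (0, 0); repeat split; try (left; auto); simpl; lia.
Qed.

Lemma is_wdist_wdist x y L : walk G x y L -> is_wdist G x y (wdist G x y).
Proof. intro W; unfold wdist; apply epsilon_spec, ord2_has_min; eauto. Qed.

Lemma wdist_refl x : ole (wdist G x x) (omega_mul 0).
Proof.
  assert (W : walk G x x (0, 0)) by (left; auto).
  exact (proj2 (is_wdist_wdist _ _ _ W) _ W).
Qed.

Hypothesis wconnectedG : wconnected G.

Lemma wdist_walk x y : walk G x y (wdist G x y).
Proof. destruct (wconnectedG x y) as [L W]; exact (proj1 (is_wdist_wdist _ _ _ W)). Qed.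

Lemma wdist_min x y L : walk G x y L -> ole (wdist G x y) L.
Proof. intro W; exact (proj2 (is_wdist_wdist _ _ _ W) _ W). Qed.

Lemma wdist_triangle x y z : ole (wdist G x z) (osum (wdist G x y) (wdist G y z)).
Proof.
  destruct (walk_trans _ _ _ _ _ (wdist_walk x y) (wdist_walk y z)) as [L [W HL]].
  exact (ole_trans _ _ _ (wdist_min _ _ _ W) HL).
Qed.

Lemma node_at_level x c s : s <= fst (wdist G x c) ->
  exists w, s <= fst (wdist G w c) <= s + 1.
Proof.
  intro Hs.
  destruct (walk_split x c _ (fst (wdist G x c) - s) (wdist_walk x c))
    as [w [P [S [WP [WS [E [HP1 HP2]]]]]]].
  exists w.
  assert (Hup : fst (wdist G w c) <= fst S) by exact (ole_fst _ _ (wdist_min _ _ _ WS)).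
  assert (Hlow : fst (wdist G x c) <= fst P + fst (wdist G w c)).
  { destruct (walk_trans _ _ _ _ _ WP (wdist_walk w c)) as [L [W HL]].
    exact (ole_fst _ _ (ole_trans _ _ _ (wdist_min _ _ _ W) HL)). }
  assert (Hsum : fst (wdist G x c) = fst P + fst S) by (rewrite E; reflexivity).
  lia.
Qed.

Lemma hyper_at_levels (x : hyper G) c (s : Z -> nat -> nat) :
  (forall i n, s i n <= fst (wdist G (x n) c)) ->
  exists g : Z -> hyper G, forall i n, s i n <= fst (wdist G (g i n) c) <= s i n + 1.
Proof.
  intro Hs.
  destruct (choice
    (fun (p : Z * nat) w => s (fst p) (snd p) <= fst (wdist G w c) <= s (fst p) (snd p) + 1))
    as [f Hf]; [intros [i n]; exact (node_at_level _ _ _ (Hs i n)) |].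
  exists (fun i n => f (i, n)); intros i n; exact (Hf (i, n)).
Qed.

End Walks.

Section Ultrafilter.
Variable F : (nat -> Prop) -> Prop.
Hypothesis F_ultra : free_ultrafilter F.

Lemma uf_full (A : nat -> Prop) : (forall n, A n) -> F A.
Proof.
  destruct F_ultra as [FT [_ [Fmono _]]].
  intro HA; exact (Fmono _ _ (fun n _ => HA n) FT).
Qed.

Lemma uf_weaken (A B : nat -> Prop) : (forall n, A n -> B n) -> F A -> F B.
Proof. destruct F_ultra as [_ [_ [Fmono _]]]; exact (Fmono A B). Qed.

Lemma uf_and (A B : nat -> Prop) : F A -> F B -> F (fun n => A n /\ B n).
Proof. destruct F_ultra as [_ [_ [_ [Fand _]]]]; exact (Fand A B). Qed.

Lemma uf_nonempty (A : nat -> Prop) : F A -> exists n, A n.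
Proof.
  destruct F_ultra as [_ [Fnot0 [Fmono _]]].
  intro FA; apply NNPP; intro H.
  apply Fnot0, (Fmono A); [intros n An; apply H; exists n |]; assumption.
Qed.

Lemma uf_complement (A : nat -> Prop) : ~ F A -> F (fun n => ~ A n).
Proof. destruct F_ultra as [_ [_ [_ [_ [Fult _]]]]]; intro; destruct (Fult A); tauto. Qed.

Definition level (h : nat) (i : Z) : nat := h * Z.to_nat (Z.of_nat h + i).

Lemma level_le h i : (Z.abs i <= Z.of_nat h)%Z -> level h i <= 2 * (h * h).
Proof. unfold level; nia. Qed.

Lemma level_ge h i : (Z.abs i < Z.of_nat h)%Z -> h <= level h i.
Proof. unfold level; nia. Qed.

Lemma level_gap h i j : (i < j)%Z -> (Z.abs i <= Z.of_nat h)%Z ->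
  (Z.abs j <= Z.of_nat h)%Z -> level h i + h <= level h j.
Proof. unfold level; nia. Qed.

Lemma le_sqrt_half K a : 2 * (K * K) <= a -> K <= Nat.sqrt (a / 2).
Proof.
  intro H; rewrite <- (Nat.sqrt_square K).
  apply Nat.sqrt_le_mono, Nat.div_le_lower_bound; lia.
Qed.

Lemma sqrt_half_le a : 2 * (Nat.sqrt (a / 2) * Nat.sqrt (a / 2)) <= a.
Proof.
  pose proof (Nat.sqrt_spec (a / 2) (Nat.le_0_l _)).
  pose proof (Nat.Div0.mul_div_le a 2); lia.
Qed.

(* The levels are h (h + i) with h = sqrt(a / 2), capped at a so that the bound holds
   everywhere and not just on a set of the ultrafilter. *)
Lemma unbounded_ladder (a : nat -> nat) : (forall M, F (fun n => M <= a n)) ->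
  exists s : Z -> nat -> nat,
    (forall i n, s i n <= a n) /\
    (forall i M, F (fun n => M <= s i n)) /\
    (forall i j m, (i < j)%Z -> F (fun n => s i n + m < s j n)).
Proof.
  intro Ha.
  pose (h n := Nat.sqrt (a n / 2)).
  assert (Hha : forall n, 2 * (h n * h n) <= a n) by (intro; apply sqrt_half_le).
  assert (Hh : forall K, F (fun n => K <= h n)).
  { intro K; apply (uf_weaken _ _ (fun n => le_sqrt_half K (a n)) (Ha _)). }
  exists (fun i n => Nat.min (level (h n) i) (a n)); split; [|split].
  - intros; lia.
  - intros i M; refine (uf_weaken _ _ _ (Hh (Z.to_nat (Z.abs i) + M + 1))); intros n Hn.
    pose proof (level_ge (h n) i); pose proof (level_le (h n) i); pose proof (Hha n); lia.
  - intros i j m Hij.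
    refine (uf_weaken _ _ _ (Hh (Z.to_nat (Z.abs i) + Z.to_nat (Z.abs j) + m + 1))); intros n Hn.
    pose proof (level_gap (h n) i j Hij); pose proof (level_le (h n) i);
      pose proof (level_le (h n) j); pose proof (Hha n); lia.
Qed.

Section Galaxies.
Variable G : OneGraph.

Lemma not_in_principal_unbounded (u : hyper G) c : ~ in_principal G F u ->
  forall M, F (fun n => M <= fst (wdist G (u n) c)).
Proof.
  intros Hu M.
  assert (Hfar : ~ F (fun n => ole (wdist G (u n) c) (omega_mul M)))
    by (intro H; apply Hu; exists c, M; exact H).
  refine (uf_weaken _ _ _ (uf_complement _ Hfar)); unfold ole, omega_mul; simpl; lia.
Qed.

Lemma lim_distant_refl (x : hyper G) : lim_distant G F x x.
Proof. exists 0; apply uf_full; intro; apply wdist_refl. Qed.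

Lemma closer_of_wdist_gap (y z : hyper G) c :
  (forall m, F (fun n => fst (wdist G (y n) c) + m < fst (wdist G (z n) c))) ->
  closer G F y z.
Proof.
  intro Hgap; exists y, z, (fun _ => c).
  split; [|split; [|split]]; [apply lim_distant_refl .. | exists c; apply lim_distant_refl |].
  intro m; refine (uf_weaken _ _ _ (Hgap m)); unfold ole, osum, omega_mul; simpl; lia.
Qed.

Hypothesis wconnectedG : wconnected G.

Lemma unbounded_not_in_principal (x : hyper G) c :
  (forall M, F (fun n => M <= fst (wdist G (x n) c))) -> ~ in_principal G F x.
Proof.
  intros Hx [c' [k Hk]].
  destruct (uf_nonempty _ (uf_and _ _ Hk (Hx (k + fst (wdist G c' c) + 1)))) as [n [Hn Hfar]].
  pose proof (ole_fst _ _ (wdist_triangle G wconnectedG (x n) c' c)).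
  apply ole_fst in Hn; unfold osum, omega_mul in *; simpl in *; lia.
Qed.

End Galaxies.
End Ultrafilter.

Theorem theorem11p2 (G : OneGraph) (F : (nat -> Prop) -> Prop) :
  free_ultrafilter F ->
  wconnected G ->
  infinitely_many_boundary G ->
  (exists u : hyper G, ~ in_principal G F u) ->
  exists g : Z -> hyper G,
    (forall i : Z, ~ in_principal G F (g i)) /\
    (forall i j : Z, (i < j)%Z -> closer G F (g i) (g j)).
Proof.
  intros HF Hwc _ [u Hu].
  pose (c := u 0).
  destruct (unbounded_ladder F HF _ (not_in_principal_unbounded F HF G u c Hu))
    as [s [Hs_le [Hs_unbounded Hs_gap]]].
  destruct (hyper_at_levels G Hwc u c s Hs_le) as [g Hg].
  exists g; split.
  - intro i; apply (unbounded_not_in_principal F HF G Hwc _ c); intro M.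
    refine (uf_weaken F HF _ _ _ (Hs_unbounded i M)); intro n.
    pose proof (Hg i n); lia.
  - intros i j Hij; apply (closer_of_wdist_gap F HF G _ _ c); intro m.
    refine (uf_weaken F HF _ _ _ (Hs_gap i j (S m) Hij)); intro n.
    pose proof (Hg i n); pose proof (Hg j n); lia.
Qed.
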